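(* Let $X,Y\in M_n$ with entries in $\mathbb R$ or $\mathbb C$. Then $Y$ is a $\circ$-pseudoinverse of $X$ if and only if $\phi(Y)$ is a pseudoinverse of $\phi(X)$ among matrices in $S_{n+1}$; and $Y$ is the $\circ$-Moore–Penrose inverse of $X$ if and only if $\phi(Y)$ satisfies the four Moore–Penrose conditions for $\phi(X)$. In particular, the Moore–Penrose inverse $\phi(X)^+$ of $\phi(X)$ lies in $S_{n+1}$ and equals $\phi(X^\oplus)$, where $X^\oplus$ is the $\circ$-Moore–Penrose inverse of $X$.
   Context: Matrices are over $F=\mathbb R$ or $\mathbb C$; $A^*$ denotes conjugate transpose. $M_n$ is the set of $n\times n$ matrices over $F$; $S_{n}$ is the set of $n\times n$ matrices all of whose row sums and column sums are zero. $\mathbf 1$ is the all-ones column vector, $J_n:=[I_n\mid -\mathbf 1]$ (an $n\times(n+1)$ matrix), $K_n:=J_nJ_n^*$, and $\phi(X):=J_n^*XJ_n$. The twisted product on $M_n$ is $X\circ Y:=XK_nY$. A pseudoinverse of a matrix $A$ is any $B$ with $ABA=A$; the Moore–Penrose inverse $A^+$ is the unique $B$ with $ABA=A$, $BAB=B$, $(AB)^*=AB$, $(BA)^*=BA$. A $\circ$-pseudoinverse of $X\in M_n$ is any $Y\in M_n$ with $X\circ Y\circ X=X$; a $\circ$-Moore–Penrose inverse of $X$ is a $Y\in M_n$ with $X\circ Y\circ X=X$, $Y\circ X\circ Y=Y$, $(X\circ Y)^*=X\circ Y$, $(Y\circ X)^*=Y\circ X$. *)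

From HB Require Import structures.
From mathcomp Require Import all_boot all_order all_algebra.
Set Implicit Arguments. Unset Strict Implicit. Unset Printing Implicit Defensive.
Import Order.TTheory GRing.Theory Num.Theory.
Local Open Scope ring_scope.

(* All definitions are parametrised by the scalar conjugation [c : F -> F]:
   for F = C it is complex conjugation (Num.conj / x^* ), for F = R it is the
   identity.  [adj c A] is the conjugate transpose A^*. *)
Section Defs.
Variable F : fieldType.
Variable c : F -> F.

Definition adj (m p : nat) (A : 'M[F]_(m, p)) : 'M[F]_(p, m) := map_mx c A^T.

Definition inS (m : nat) (A : 'M[F]_m) : Prop :=
  (forall i, \sum_j A i j = 0) /\ (forall j, \sum_i A i j = 0).

Definition Jmx (n : nat) : 'M[F]_(n, n + 1) :=
  row_mx (1%:M) (- const_mx 1).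

Definition Kmx (n : nat) : 'M[F]_n := Jmx n *m adj (Jmx n).

Definition phi (n : nat) (X : 'M[F]_n) : 'M[F]_(n + 1) :=
  adj (Jmx n) *m X *m Jmx n.

Definition twprod (n : nat) (X Y : 'M[F]_n) : 'M[F]_n := X *m Kmx n *m Y.

Definition is_pinv (m : nat) (A B : 'M[F]_m) : Prop := A *m B *m A = A.

Definition is_MP (m : nat) (A B : 'M[F]_m) : Prop :=
  [/\ A *m B *m A = A, B *m A *m B = B,
      adj (A *m B) = A *m B & adj (B *m A) = B *m A].

Definition is_circ_pinv (n : nat) (X Y : 'M[F]_n) : Prop :=
  twprod (twprod X Y) X = X.

Definition is_circ_MP (n : nat) (X Y : 'M[F]_n) : Prop :=
  [/\ twprod (twprod X Y) X = X, twprod (twprod Y X) Y = Y,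
      adj (twprod X Y) = twprod X Y & adj (twprod Y X) = twprod Y X].
End Defs.

From Pilot Require Import Defs.
From HB Require Import structures.
From mathcomp Require Import all_boot all_order all_algebra.
Set Implicit Arguments. Unset Strict Implicit. Unset Printing Implicit Defensive.
Import Order.TTheory GRing.Theory Num.Theory.
Local Open Scope ring_scope.

(* We work over a numeric field F with an involutive conjugation c
   satisfying x * c x = |x|^2 (the identity on a real field, complex
   conjugation on a numerically closed field); adj c is then a genuine
   conjugate transpose and the usual Moore-Penrose theory holds:
   - Gram matrices M M^* of row-free M are invertible, which yields existence
     of the Moore-Penrose inverse (via a full-rank factorisation) and its
     uniqueness follows from the four equations alone.
   - The map phi(X) = J^* X J turns the twisted product into the ordinary one,
     phi(X) phi(Y) = phi(X o Y), commutes with adj, lands in S_(n+1), and is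
     injective because K = J J^* is invertible.  Hence the o-(Moore-Penrose)
     conditions on Y are exactly the ordinary ones on phi(Y).
   - With the hermitian projection P = J^* K^-1 J, the range of phi is the set
     of B with P B = B = B P; the Moore-Penrose inverse of phi(X) lies there,
     so it is phi of the o-Moore-Penrose inverse of X, and lies in S_(n+1). *)

Section ConjugateTranspose.
Variable F : numFieldType.
Variable c : {rmorphism F -> F}.
Hypothesis cK : involutive c.
Hypothesis c_norm : forall x : F, x * c x = `|x| ^+ 2.

Local Notation adj := (adj c).

Lemma adjM m p q (A : 'M[F]_(m, p)) (B : 'M[F]_(p, q)) :
  adj (A *m B) = adj B *m adj A.
Proof. by rewrite /Defs.adj trmx_mul map_mxM. Qed.

Lemma adjK m p (A : 'M[F]_(m, p)) : adj (adj A) = A.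
Proof. by apply/matrixP=> i j; rewrite /Defs.adj !mxE cK. Qed.

Lemma adj_invmx m (A : 'M[F]_m) : adj (invmx A) = invmx (adj A).
Proof. by rewrite /Defs.adj trmx_inv map_invmx. Qed.

Lemma mxrank_adj m p (A : 'M[F]_(m, p)) : \rank (adj A) = \rank A.
Proof. by rewrite /Defs.adj mxrank_map mxrank_tr. Qed.

Lemma adj0 m p : adj (0 : 'M[F]_(m, p)) = 0.
Proof. by apply/matrixP=> i j; rewrite /Defs.adj !mxE rmorph0. Qed.

Lemma adj_ones m p : adj (const_mx 1 : 'M[F]_(m, p)) = const_mx 1.
Proof. by apply/matrixP=> i j; rewrite /Defs.adj !mxE rmorph1. Qed.

Lemma adj_invmx_gram m p (M : 'M[F]_(m, p)) :
  adj (invmx (M *m adj M)) = invmx (M *m adj M).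
Proof. by rewrite adj_invmx adjM adjK. Qed.

Lemma inS_ones m (A : 'M[F]_m) :
  A *m const_mx 1 = 0 :> 'cV_m -> const_mx 1 *m A = 0 :> 'rV_m -> inS A.
Proof.
move=> /matrixP rows0 /matrixP cols0; split=> [i|j].
  by have := rows0 i 0; rewrite !mxE; under eq_bigr do rewrite mxE mulr1.
by have := cols0 0 j; rewrite !mxE; under eq_bigr do rewrite mxE mul1r.
Qed.

(* Positivity: the diagonal of W W^* holds the squared row norms of W. *)
Lemma gram_eq0 k p (W : 'M[F]_(k, p)) : W *m adj W = 0 -> W = 0.
Proof.
move=> /matrixP WW0; apply/matrixP=> i j; rewrite mxE.
have row_norm0 : \sum_l `|W i l| ^+ 2 = 0.
  transitivity ((W *m adj W) i i); last by rewrite WW0 mxE.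
  by rewrite mxE; apply: eq_bigr => l _; rewrite /Defs.adj !mxE c_norm.
have /psumr_eq0P/(_ j isT)/eqP := row_norm0.
by rewrite sqrf_eq0 normr_eq0 => /(_ (fun l _ => exprn_ge0 2 (normr_ge0 _)))/eqP.
Qed.

Lemma gram_unit r p (M : 'M[F]_(r, p)) : row_free M -> M *m adj M \in unitmx.
Proof.
move=> freeM; rewrite -row_free_unit; apply: inj_row_free => v vMM0.
have vM0 : v *m M = 0.
  by apply: gram_eq0; rewrite adjM mulmxA -(mulmxA v) vMM0 mul0mx.
by apply/eqP; rewrite -(mulmx_free_eq0 _ freeM) vM0.
Qed.

Lemma MP_unique m (A B B' : 'M[F]_m) : is_MP c A B -> is_MP c A B' -> B = B'.
Proof.
case=> ABA BAB hAB hBA [AB'A B'AB' hAB' hB'A].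
have adjA_r : adj A = adj A *m (A *m B') by rewrite -hAB' -adjM AB'A.
have adjA_l : adj A = B *m A *m adj A by rewrite -hBA -adjM mulmxA ABA.
have -> : B = B *m A *m B'.
  transitivity (B *m (adj B *m adj A)); first by rewrite -adjM hAB mulmxA BAB.
  by rewrite adjA_r (mulmxA (adj B)) -adjM hAB !mulmxA BAB.
transitivity (adj A *m adj B' *m B'); last by rewrite -adjM hB'A B'AB'.
by rewrite {1}adjA_l -!(mulmxA (B *m A)) -adjM hB'A B'AB'.
Qed.

Lemma MP_full_rank_factor m r (G : 'M[F]_(m, r)) (H : 'M[F]_(r, m)) :
  row_free (adj G) -> row_free H ->
  is_MP c (G *m H)
    (adj H *m invmx (H *m adj H) *m invmx (adj G *m G) *m adj G).
Proof.
move=> freeG freeH; have uH := gram_unit freeH.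
have uG := gram_unit freeG; rewrite adjK in uG.
set U := invmx (H *m adj H); set V := invmx (adj G *m G).
have HU : H *m adj H *m U = 1%:M by rewrite mulmxV.
have VG : V *m (adj G *m G) = 1%:M by rewrite mulVmx.
have aU : adj U = U := adj_invmx_gram H.
have aV : adj V = V by rewrite adj_invmx adjM adjK.
have AB : G *m H *m (adj H *m U *m V *m adj G) = G *m V *m adj G.
  by rewrite !mulmxA -(mulmxA G H) -(mulmxA G (H *m adj H)) HU mulmx1.
have BA : adj H *m U *m V *m adj G *m (G *m H) = adj H *m U *m H.
  by rewrite !mulmxA -(mulmxA _ (adj G) G) -(mulmxA _ V) VG mulmx1.
split.
- by rewrite AB !mulmxA -(mulmxA _ (adj G) G) -(mulmxA _ V) VG mulmx1.
- by rewrite BA !mulmxA -(mulmxA _ H (adj H)) -(mulmxA _ (H *m adj H)) HU mulmx1.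
- by rewrite AB !adjM adjK aV mulmxA.
- by rewrite BA !adjM adjK aU mulmxA.
Qed.

Lemma MP_exists m (A : 'M[F]_m) : exists B, is_MP c A B.
Proof.
eexists; rewrite -{1}(mulmx_base A); apply: MP_full_rank_factor.
- by rewrite /row_free mxrank_adj; have := col_base_full A.
- exact: row_base_free.
Qed.

(* If a hermitian P fixes A on both sides, it fixes the Moore-Penrose inverse
   of A on both sides too (B = B B^* A^* = A^* B^* B). *)
Lemma MP_proj_fixed m (A B P : 'M[F]_m) :
  adj P = P -> P *m A = A -> A *m P = A -> is_MP c A B ->
  P *m B = B /\ B *m P = B.
Proof.
move=> hP PA AP [_ BAB hAB hBA].
have B_left : B = adj A *m adj B *m B by rewrite -adjM hBA BAB.
have B_right : B = B *m adj B *m adj A.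
  by rewrite -mulmxA -adjM hAB mulmxA BAB.
split.
  by rewrite {1}B_left !mulmxA -{1}hP -adjM AP -B_left.
by rewrite {1}B_right -mulmxA -{1}hP -adjM PA -B_right.
Qed.

Section Phi.
Variable n : nat.
Local Notation J := (Jmx F n).
Local Notation K := (Kmx c n).
Local Notation phi := (@phi F c n).

(* J = [I | -1] has the right inverse [I ; 0]. *)
Lemma Jmx_free : row_free J.
Proof.
apply/row_freeP; exists (col_mx 1%:M 0).
by rewrite /Jmx mul_row_col mulmx1 mulmx0 addr0.
Qed.

Lemma Kmx_unit : K \in unitmx.
Proof. exact: gram_unit Jmx_free. Qed.

Lemma Jmx_ones : J *m const_mx 1 = 0 :> 'cV_n.
Proof.
apply/matrixP=> l k; rewrite !mxE.
under eq_bigr do rewrite [const_mx 1 _ _]mxE mulr1.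
rewrite big_split_ord /= big_ord1 /Jmx row_mxEr !mxE.
under eq_bigr do rewrite row_mxEl mxE.
rewrite (bigD1 l) //= big1 => [|j /negbTE]; last by rewrite eq_sym => ->.
by rewrite eqxx addr0 subrr.
Qed.

(* Since J 1 = 0 and 1^T J^* = 0, phi(X) has zero row and column sums. *)
Lemma phi_inS (X : 'M[F]_n) : inS (phi X).
Proof.
apply: inS_ones; first by rewrite /phi -!mulmxA Jmx_ones !mulmx0.
have onesJ : const_mx 1 *m adj J = 0 :> 'rV_n.
  by rewrite -adj_ones -adjM Jmx_ones adj0.
by rewrite /phi !mulmxA onesJ !mul0mx.
Qed.

Lemma phi_mul (X Y : 'M[F]_n) : phi X *m phi Y = phi (twprod c X Y).
Proof. by rewrite /phi /twprod /Kmx !mulmxA. Qed.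

Lemma adj_phi (X : 'M[F]_n) : adj (phi X) = phi (adj X).
Proof. by rewrite /phi !adjM adjK mulmxA. Qed.

Definition phi_inv (B : 'M[F]_(n + 1)) : 'M[F]_n :=
  invmx K *m J *m B *m adj J *m invmx K.

Lemma phiK : cancel phi phi_inv.
Proof.
move=> X; rewrite /phi_inv /phi !mulmxA -(mulmxA (invmx K) J (adj J)).
by rewrite mulVmx ?Kmx_unit // mul1mx -(mulmxA X J) mulmxK ?Kmx_unit.
Qed.

Lemma phi_inj : injective phi.
Proof. exact: can_inj phiK. Qed.

(* The hermitian projection onto the range of phi. *)
Definition Pmx : 'M[F]_(n + 1) := adj J *m invmx K *m J.

Lemma adj_Pmx : adj Pmx = Pmx.
Proof. by rewrite /Pmx !adjM adjK adj_invmx_gram mulmxA. Qed.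

Lemma Pmx_phi (X : 'M[F]_n) : Pmx *m phi X = phi X.
Proof.
by rewrite /Pmx /phi !mulmxA -(mulmxA _ J (adj J)) mulmxKV ?Kmx_unit.
Qed.

Lemma phi_Pmx (X : 'M[F]_n) : phi X *m Pmx = phi X.
Proof.
by rewrite /Pmx /phi !mulmxA -(mulmxA _ J (adj J)) mulmxK ?Kmx_unit.
Qed.

Lemma phi_invK (B : 'M[F]_(n + 1)) :
  Pmx *m B = B -> B *m Pmx = B -> phi (phi_inv B) = B.
Proof.
by move=> PB BP; rewrite /phi /phi_inv !mulmxA -{2}PB -{2}BP /Pmx !mulmxA.
Qed.

Lemma circ_pinv_phi (X Y : 'M[F]_n) :
  is_circ_pinv c X Y <-> inS (phi Y) /\ is_pinv (phi X) (phi Y).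
Proof.
rewrite /is_circ_pinv /is_pinv !phi_mul; split=> [XYX | [_ /phi_inj //]].
by split; [exact: phi_inS | rewrite XYX].
Qed.

Lemma circ_MP_phi (X Y : 'M[F]_n) :
  is_circ_MP c X Y <-> is_MP c (phi X) (phi Y).
Proof.
rewrite /is_circ_MP /is_MP !phi_mul !adj_phi.
split=> -[h1 h2 h3 h4]; split; rewrite ?h1 ?h2 ?h3 ?h4 //; exact: phi_inj.
Qed.

Lemma MP_phi (X : 'M[F]_n) :
  exists Xo : 'M[F]_n, is_circ_MP c X Xo /\
    forall B : 'M[F]_(n + 1), is_MP c (phi X) B -> inS B /\ B = phi Xo.
Proof.
have [B0 MP_B0] := MP_exists (phi X).
have [PB0 B0P] := MP_proj_fixed adj_Pmx (Pmx_phi X) (phi_Pmx X) MP_B0.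
have B0_phi := phi_invK PB0 B0P.
exists (phi_inv B0); split; first by apply/circ_MP_phi; rewrite B0_phi.
move=> B /MP_unique/(_ MP_B0) ->; split; last by rewrite B0_phi.
by rewrite -B0_phi; exact: phi_inS.
Qed.

End Phi.
End ConjugateTranspose.

Lemma circ_inverse_phi (F : numFieldType) (c : {rmorphism F -> F}) :
  involutive c -> (forall x : F, x * c x = `|x| ^+ 2) ->
  forall (n : nat) (X Y : 'M[F]_n),
  (is_circ_pinv c X Y <-> inS (phi c Y) /\ is_pinv (phi c X) (phi c Y)) /\
  (is_circ_MP c X Y <-> is_MP c (phi c X) (phi c Y)) /\
  (exists Xo : 'M[F]_n, is_circ_MP c X Xo /\
     forall B : 'M[F]_(n + 1), is_MP c (phi c X) B ->
       inS B /\ B = phi c Xo).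
Proof.
move=> cK c_norm n X Y.
by split; [exact: circ_pinv_phi | split; [exact: circ_MP_phi | exact: MP_phi]].
Qed.

Theorem theorem3 :
  (forall (F : realFieldType) (n : nat) (X Y : 'M[F]_n),
     let c := (fun x : F => x) in
     (is_circ_pinv c X Y <->
        inS (phi c Y) /\ is_pinv (phi c X) (phi c Y)) /\
     (is_circ_MP c X Y <-> is_MP c (phi c X) (phi c Y)) /\
     (exists Xo : 'M[F]_n, is_circ_MP c X Xo /\
        forall B : 'M[F]_(n + 1), is_MP c (phi c X) B ->
          inS B /\ B = phi c Xo))
  /\
  (forall (F : numClosedFieldType) (n : nat) (X Y : 'M[F]_n),
     let c := (fun x : F => x^*) in
     (is_circ_pinv c X Y <->
        inS (phi c Y) /\ is_pinv (phi c X) (phi c Y)) /\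
     (is_circ_MP c X Y <-> is_MP c (phi c X) (phi c Y)) /\
     (exists Xo : 'M[F]_n, is_circ_MP c X Xo /\
        forall B : 'M[F]_(n + 1), is_MP c (phi c X) B ->
          inS B /\ B = phi c Xo)).
Proof.
split=> F n X Y c.
-
  apply: (@circ_inverse_phi F idfun) => // x.
  by rewrite real_normK ?num_real // expr2.
-
  apply: (@circ_inverse_phi F Num.conj); first exact: conjCK.
  by move=> x; rewrite normCK.
Qed.
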